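(* For any groupcast index coding problem, the optimal broadcast rate satisfies $\beta\le\beta_{IUPM}$, where $\beta_{IUPM}$ is the independent user partition multicast rate defined in the context.
   Context: GIC problem: there are $m$ packets $x_1,\dots,x_m$, each a binary string of length $t$. For each $i\in[m]$ there is a nonempty set $U_i=\{u_i^1,\dots,u_i^{|U_i|}\}$ of users demanding $x_i$, $U=\bigcup_i U_i$; user $u_i^j$ knows the packets $x_{i'}$, $i'\in A_i^j$, where $A_i^j\subseteq[m]\setminus\{i\}$. An index code of length $r$ for packet length $t$ consists of an encoder $\phi:(\{0,1\}^t)^m\to\{0,1\}^r$ and, for each user $u_i^j$, a decoder $\psi_i^j$ mapping $\phi(x_1,\dots,x_m)$ together with $(x_{i'})_{i'\in A_i^j}$ to $x_i$, correctly for all packet values. The optimal broadcast rate is $\beta=\inf_t\inf r/t$, the inner infimum over all index codes for packet length $t$. IUPM rate: take a partition of $U$ into nonempty disjoint sets $W_1,\dots,W_h$ ($1\le h\le m$), with $Y_e=\{i: u_i^j\in W_e\text{ for some } j\}$, $c_e=\min\{|A_i^j\cap Y_e|: u_i^j\in W_e\}$ and $b_e=|Y_e|-c_e$. Let $\mathbb{F}=GF(2^s)$ for some $s\ge1$, with packets viewed (when $s\mid t$) as vectors in $\mathbb{F}^{t/s}$ and linear combinations taken componentwise. A valid coefficient choice consists, for each $e\in[h]$, of $b_e$ vectors $\alpha\in\mathbb{F}^m$ with $\alpha_i=0$ for $i\notin Y_e$, such that every user $u_i^j\in W_e$ can recover $x_i$ from the $b_e$ combinations $\sum_{i'}\alpha_{i'}x_{i'}$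 together with its side information (e.g. the combinations of a $(|Y_e|,b_e)$ MDS code on the packets of $Y_e$). Let $\mathbf N$ be the matrix whose rows are all $\sum_e b_e$ of these vectors. The IUPM rate of the partition is the minimum of $\operatorname{rank}\mathbf N$ over $s$ and all valid coefficient choices, and $\beta_{IUPM}$ is the minimum of this over all user partitions. *)

From HB Require Import structures.
From mathcomp Require Import all_boot all_order all_algebra.
From mathcomp Require Import classical_sets reals.
Set Implicit Arguments. Unset Strict Implicit. Unset Printing Implicit Defensive.
Import Order.TTheory GRing.Theory Num.Theory.
Local Open Scope ring_scope.

(* A GIC problem with m packets is given by a finite type U of users, the
   demanded packet  dem u  of each user and its side-information set  A u.
   (Standing hypotheses  dem u \notin A u  and  every packet is demanded
   are stated as hypotheses of the theorem.) *)
Section GIC.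
Variables (m : nat) (U : finType) (dem : U -> 'I_m) (A : U -> {set 'I_m}).

Definition bits (t : nat) := (t.-tuple bool)%type.

Definition is_index_code (t r : nat) (phi : {ffun 'I_m -> bits t} -> bits r) : Prop :=
  forall u : U,
    exists psi : bits r -> {ffun {i : 'I_m | i \in A u} -> bits t} -> bits t,
      forall x : {ffun 'I_m -> bits t},
        psi (phi x) [ffun j => x (val j)] = x (dem u).

Definition code_rates (R : realType) : set R :=
  [set q : R | exists (t r : nat) (phi : {ffun 'I_m -> bits t} -> bits r),
      (0 < t)%N /\ is_index_code phi /\ q = r%:R / t%:R]%classic.

Definition beta (R : realType) : R := inf (code_rates (R:=R)).

Definition Yset (W : {set U}) : {set 'I_m} := [set dem u | u in W].

(* c_e = min_{u in W} |A u :&: Y_e|  (for nonempty W; the neutral element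
   #|Y_e| is never the minimum's only contributor when W is nonempty since
   |A u :&: Y_e| <= |Y_e|) *)
Definition cval (W : {set U}) : nat :=
  \big[minn/#|Yset W|]_(u in W) #|A u :&: Yset W|.

Definition bval (W : {set U}) : nat := (#|Yset W| - cval W)%N.

Definition valid_coeffs (F : finFieldType) (W : {set U})
    (alpha : 'M[F]_(bval W, m)) : Prop :=
  (forall (k : 'I_(bval W)) (i : 'I_m), i \notin Yset W -> alpha k i = 0) /\
  (forall u, u \in W ->
     exists dec : 'cV[F]_(bval W) -> {ffun {i : 'I_m | i \in A u} -> F} -> F,
       forall x : 'cV[F]_m,
         dec (alpha *m x) [ffun j => x (val j) 0] = x (dem u) 0).

Definition user_partition (h : nat) (W : 'I_h -> {set U}) : Prop :=
  [/\ (0 < h)%N, (h <= m)%N,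
      (forall e, W e != finset.set0),
      (forall e e', e != e' -> [disjoint W e & W e']) &
      (forall u, exists e, u \in W e)].

(* the set of ranks of N over all partitions, all s >= 1, the field
   GF(2^s) (any finite field with 2^s elements), and all valid choices *)
Definition iupm_rates (R : realType) : set R :=
  [set q : R | exists (h : nat) (W : 'I_h -> {set U}) (s : nat) (F : finFieldType)
                  (alpha : forall e : 'I_h, 'M[F]_(bval (W e), m)),
      [/\ user_partition W, (0 < s)%N, #|F| = (2 ^ s)%N,
          (forall e, valid_coeffs (alpha e)) &
          q = (\rank (\mxcol_e alpha e))%:R]]%classic.

(* beta_IUPM: the minimum (an infimum of a set of naturals) of these ranks *)
Definition beta_IUPM (R : realType) : R := inf (iupm_rates (R:=R)).

End GIC.

From HB Require Import structures.
From mathcomp Require Import all_boot all_order all_algebra.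
From mathcomp Require Import classical_sets reals.
Set Implicit Arguments. Unset Strict Implicit. Unset Printing Implicit Defensive.
Import Order.TTheory GRing.Theory Num.Theory.
Local Open Scope ring_scope.

(* Every IUPM scheme over GF(2^s) is an index code of rate rank N: identify
   s-bit packets with field symbols and broadcast the rank N independent
   combinations row_base N *m x, from which N *m x, hence every group's
   combinations, can be recomputed.  So beta, an infimum over a larger set,
   is at most beta_IUPM; that infimum is not over the empty set because
   grouping the users by demanded packet is an IUPM scheme with b_e = 1. *)

Lemma card_eq_cancel (T1 T2 : finType) :
  #|T1| = #|T2| -> {f : T1 -> T2 & {g : T2 -> T1 | cancel f g}}.
Proof.
move=> eqT; exists (fun x => enum_val (cast_ord eqT (enum_rank x))).
exists (fun y => enum_val (cast_ord (esym eqT) (enum_rank y))).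
by move=> x; rewrite enum_valK cast_ordK enum_rankK.
Qed.

Lemma card_bits t : #|{: bits t}| = (2 ^ t)%N.
Proof. by rewrite card_tuple card_bool. Qed.

Lemma row_base_recover (F : fieldType) (n m : nat) (N : 'M[F]_(n, m)) :
  N *m pinvmx (row_base N) *m row_base N = N.
Proof. by rewrite mulmxKpV // eq_row_base. Qed.

Section IndexCodes.
Variables (m : nat) (U : finType) (dem : U -> 'I_m) (A : U -> {set 'I_m}).

Definition recovers_demand (F : finFieldType) (n : nat) (N : 'M[F]_(n, m))
    (u : U) : Prop :=
  exists dec : 'cV[F]_n -> {ffun {i : 'I_m | i \in A u} -> F} -> F,
    forall x : 'cV[F]_m, dec (N *m x) [ffun j => x (val j) 0] = x (dem u) 0.

Section LinearCodes.
Variables (F : finFieldType) (n : nat).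

Lemma recovers_demand_row_base (N : 'M[F]_(n, m)) u :
  recovers_demand N u -> recovers_demand (row_base N) u.
Proof.
case=> dec decK; exists (fun y => dec (N *m pinvmx (row_base N) *m y)) => x.
by rewrite mulmxA row_base_recover.
Qed.

Lemma linear_index_code (s : nat) (N : 'M[F]_(n, m)) :
  #|F| = (2 ^ s)%N -> (forall u, recovers_demand N u) ->
  exists phi : {ffun 'I_m -> bits s} -> bits (n * s),
    is_index_code dem A phi.
Proof.
move=> cardF recN.
have [enc [dec encK]] := card_eq_cancel (etrans (card_bits s) (esym cardF)).
have card_cV : #|{: 'cV[F]_n}| = #|{: bits (n * s)}|.
  by rewrite card_mx cardF card_bits muln1 -expnM mulnC.
have [E [D EK]] := card_eq_cancel card_cV.
exists (fun x => E (N *m \col_i enc (x i))) => u.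
have [decN decNK] := recN u.
exists (fun c side => dec (decN (D c) [ffun j => enc (side j)])) => x.
set X := \col_i enc (x i).
have -> : [ffun j => enc ([ffun j0 => x (val j0)] j)] =
          [ffun j : {i : 'I_m | i \in A u} => X (val j) 0].
  by apply/ffunP => j; rewrite !ffunE mxE.
by rewrite EK decNK mxE encK.
Qed.

End LinearCodes.

Lemma iupm_recovers_demand (h : nat) (W : 'I_h -> {set U}) (F : finFieldType)
    (alpha : forall e : 'I_h, 'M[F]_(bval dem A (W e), m)) :
  user_partition m W -> (forall e, valid_coeffs (alpha e)) ->
  forall u, recovers_demand (\mxcol_e alpha e) u.
Proof.
case=> _ _ _ _ coverW valid u; have [e uWe] := coverW u.
have [_ /(_ u uWe) [dec decK]] := valid e.
exists (fun y => dec (submxcol y e)) => x.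
by rewrite -submxcol_mul mxcolK.
Qed.

Variable R : realType.

Lemma code_rates_ge0 : lbound (code_rates dem A (R:=R)) 0.
Proof. by move=> q [t [r [phi [_ [_ ->]]]]]; rewrite divr_ge0. Qed.

Lemma beta_le_code_rate q : code_rates dem A q -> beta dem A R <= q.
Proof. exact: ge_inf (ex_intro _ 0 code_rates_ge0) q. Qed.

Lemma iupm_rate_code_rate q : iupm_rates dem A q -> code_rates dem A (R:=R) q.
Proof.
case=> h [W [s [F [alpha [partW s_gt0 cardF valid ->]]]]].
set N := \mxcol_e alpha e.
have [phi phiP] := linear_index_code cardF
  (fun u => recovers_demand_row_base (iupm_recovers_demand partW valid u)).
exists s, (\rank N * s)%N, phi; split => //; split => //.
by rewrite natrM mulfK // pnatr_eq0 -lt0n.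
Qed.

Lemma iupm_rates_m0 : m = 0%N -> iupm_rates dem A (R:=R) = set0.
Proof.
move=> m0; apply/seteqP; split => q //= [h [W [s [F [alpha [[h_gt0 h_le_m _ _ _] _ _ _ _]]]]]].
by move: (leq_trans h_gt0 h_le_m); rewrite m0.
Qed.

Lemma code_rate0_m0 : m = 0%N -> code_rates dem A (R:=R) 0.
Proof.
move=> m0; exists 1%N, 0%N, (fun _ => [tuple]); split => //; split; last first.
  by rewrite mul0r.
by move=> u; have := ltn_ord (dem u); rewrite {2}m0.
Qed.

Section DemandPartition.
Hypotheses (demA : forall u, dem u \notin A u)
           (dem_onto : forall i, exists u, dem u = i).

Definition demand_class (i : 'I_m) : {set U} := [set u | dem u == i].

Lemma Yset_demand_class i : Yset dem (demand_class i) = [set i].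
Proof.
apply/setP => j; rewrite inE; apply/imsetP/eqP => [[u]|->].
  by rewrite inE => /eqP <-.
by have [u dem_u] := dem_onto i; exists u; rewrite ?inE dem_u.
Qed.

Lemma bval_demand_class i : bval dem A (demand_class i) = 1%N.
Proof.
rewrite /bval /cval Yset_demand_class cards1.
have [u0 dem_u0] := dem_onto i.
have u0_in : u0 \in demand_class i by rewrite inE dem_u0.
have A_u0 : #|A u0 :&: [set i]| = 0%N.
  by apply/eqP; rewrite cards_eq0 finset.setIC finset.setI_eq0 disjoints1 -dem_u0.
have := bigmin_le_cond 1%N (fun u => #|A u :&: [set i]|) u0_in.
by rewrite leEnat minEnat A_u0 leqn0 => /eqP ->.
Qed.

Lemma user_partition_demand_class :
  (0 < m)%N -> user_partition m demand_class.
Proof.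
move=> m_gt0; split => //.
- by move=> i; apply/set0Pn; have [u dem_u] := dem_onto i; exists u; rewrite inE dem_u.
- move=> i j neq_ij; rewrite -finset.setI_eq0; apply/eqP/setP => u.
  rewrite !inE; apply/negbTE/andP => -[/eqP dem_i /eqP dem_j].
  by rewrite -dem_i -dem_j eqxx in neq_ij.
- by move=> u; exists (dem u); rewrite inE.
Qed.

Definition unit_coeffs (i : 'I_m) : 'M['F_2]_(bval dem A (demand_class i), m) :=
  \matrix_(k, j) (j == i)%:R.

Lemma valid_unit_coeffs i : valid_coeffs (unit_coeffs i).
Proof.
split => [k j|u]; first by rewrite Yset_demand_class inE mxE => /negbTE ->.
rewrite inE => /eqP dem_u.
have k0 : 'I_(bval dem A (demand_class i)) by rewrite bval_demand_class; exact: ord0.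
exists (fun y _ => y k0 0) => x.
rewrite mxE (bigD1 i) //= mxE eqxx mul1r big1 ?addr0; first by rewrite dem_u.
by move=> j /negbTE neq_ji; rewrite mxE neq_ji mul0r.
Qed.

Lemma iupm_rates_neq0 : (0 < m)%N -> (iupm_rates dem A (R:=R) !=set0)%classic.
Proof.
move=> m_gt0; exists (\rank (\mxcol_i unit_coeffs i))%:R.
exists m, demand_class, 1%N, _, unit_coeffs; split => //.
- exact: user_partition_demand_class.
- by rewrite card_Fp.
- exact: valid_unit_coeffs.
Qed.

End DemandPartition.
End IndexCodes.

Theorem theorem3 (R : realType) (m : nat) (U : finType)
    (dem : U -> 'I_m) (A : U -> {set 'I_m})
    (hA : forall u : U, dem u \notin A u)
    (hdem : forall i : 'I_m, exists u : U, dem u = i) :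
  beta dem A R <= beta_IUPM dem A R.
Proof.
(* For m = 0 no user partition exists and inf set0 = 0. *)
have [m0 | m_gt0] := posnP m.
  by rewrite /beta_IUPM iupm_rates_m0 // inf0; apply/beta_le_code_rate/code_rate0_m0.
apply: lb_le_inf => [|q /iupm_rate_code_rate]; last exact: beta_le_code_rate.
exact: iupm_rates_neq0.
Qed.
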